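(* Let $u$ be any configuration on $K_{m,n}$. Then there exists a proof $f$ for the rank of $u$ whose support is contained in $B_n$, i.e. with $f_{a_i}=0$ for all $i=1,\dots,m$.
   Context: Let $m,n\ge 1$. $K_{m,n}$ is the complete bipartite graph with vertex set $V=A_m\sqcup B_n$, $A_m=\{a_1,\dots,a_m\}$, $B_n=\{b_1,\dots,b_n\}$, with exactly one edge $\{a_i,b_j\}$ for every $i,j$; $a_m$ is the sink. A configuration is a function $u:V\to\mathbb Z$; $\mathrm{degree}(u)=\sum_{c}u_c$. For $c\in V$ with graph degree $d_c$, $\Delta^{(c)}=d_c e_c-\sum_{c'\text{ adjacent to }c}e_{c'}$, where $e_c$ is the indicator configuration of $c$. Two configurations are toppling equivalent if their difference is an integer combination of the $\Delta^{(c)}$. A configuration is effective if it is toppling equivalent to a non-negative configuration. $\mathrm{rank}(u)=-1+\min\{\mathrm{degree}(f): f\ge 0,\ u-f\text{ not effective}\}$. A proof for the rank of $u$ is a non-negative $f$ with $u-f$ not effective and $\mathrm{degree}(f)=\mathrm{rank}(u)+1$. The support of a non-negative configuration $f$ is $\{c\in V: f_c>0\}$. *)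

From mathcomp Require Import all_boot all_order all_algebra.
Set Implicit Arguments. Unset Strict Implicit. Unset Printing Implicit Defensive.
Import Order.TTheory GRing.Theory Num.Theory.
Local Open Scope ring_scope.

(* Vertices of K_{m,n}: inl i = a_{i+1} in A_m, inr j = b_{j+1} in B_n. *)
Definition vert (m n : nat) : finType := ('I_m + 'I_n)%type.

Definition adj (m n : nat) (c c' : vert m n) : bool :=
  match c, c' with
  | inl _, inr _ => true
  | inr _, inl _ => true
  | _, _ => false
  end.

Definition gdeg (m n : nat) (c : vert m n) : int :=
  match c with inl _ => (n%:Z) | inr _ => (m%:Z) end.

Definition config (m n : nat) := vert m n -> int.

Definition degree (m n : nat) (u : config m n) : int := \sum_(c : vert m n) u c.

Definition ind (m n : nat) (c : vert m n) : config m n :=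
  fun x => if x == c then 1 else 0.

Definition Delta (m n : nat) (c : vert m n) : config m n :=
  fun x => gdeg c * ind c x - \sum_(c' : vert m n | adj c c') ind c' x.

Definition toppling_equiv (m n : nat) (u v : config m n) : Prop :=
  exists k : vert m n -> int,
    forall x, u x - v x = \sum_(c : vert m n) k c * Delta c x.

Definition nonneg (m n : nat) (f : config m n) : Prop := forall x, 0 <= f x.

Definition effective (m n : nat) (u : config m n) : Prop :=
  exists v : config m n, nonneg v /\ toppling_equiv u v.

Definition csub (m n : nat) (u f : config m n) : config m n := fun x => u x - f x.

Definition rank_is (m n : nat) (u : config m n) (r : int) : Prop :=
  (exists f : config m n, [/\ nonneg f, ~ effective (csub u f) & degree f = r + 1])
  /\ (forall g : config m n, nonneg g -> ~ effective (csub u g) -> r + 1 <= degree g).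

Definition is_rank_proof (m n : nat) (u f : config m n) : Prop :=
  exists r : int, [/\ rank_is u r, nonneg f, ~ effective (csub u f) & degree f = r + 1].

From mathcomp Require Import all_boot all_order all_algebra.
From mathcomp Require Import zify ring.
From Stdlib Require Import Classical.
Import Order.TTheory GRing.Theory Num.Theory.
Local Open Scope ring_scope.

(* For a rank proof f of u let D = u - f.  The key fact: if D + e_(a_i) - e_(b_j)
   is effective for every j, then D is effective.  Take firing scripts k_j
   witnessing this, shifted so that none of them fires a_i, and let F be their
   pointwise maximum.  Every vertex x loses at most what it loses under the k_j
   attaining the maximum at x, so D - Lap F is nonnegative except for a possible
   deficit of one chip at a_i.  Either some b_j fires strictly more under F than
   under k_j, which repays that chip, or F agrees with every k_j at b_j, and then
   F with a_i fired once less works (this needs n >= 1).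
   Hence a rank proof with a chip on some a_i can move it to a suitable b_j and
   remain a rank proof; iterating empties A. *)

Lemma classical_ex_minn {P : nat -> Prop} :
  (exists k, P k) -> exists2 k, P k & forall k', P k' -> (k <= k')%N.
Proof.
case=> k; elim/ltn_ind: k => k IH Pk.
case: (classic (exists2 k', (k' < k)%N & P k')) => [[k' lt_k'k Pk']|no_less].
  exact: IH lt_k'k Pk'.
exists k => // k' Pk'; rewrite leqNgt; apply/negP => lt_k'k.
by apply: no_less; exists k'.
Qed.

Section CompleteBipartite.
Context {m n : nat}.
Implicit Types (u D f g k : config m n) (x c : vert m n).

Definition Lap k : config m n := fun x =>
  match x with
  | inl i => n%:Z * k (inl i) - \sum_(j < n) k (inr j)
  | inr j => m%:Z * k (inr j) - \sum_(i < m) k (inl i)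
  end.

Lemma ind_ge0 c x : 0 <= ind c x.
Proof. by rewrite /ind; case: eqP. Qed.

Lemma ind_inl i i' : ind (inl i) (inl i' : vert m n) = (i' == i)%:R.
Proof. by rewrite /ind -[inl i' == inl i]/(i' == i); case: (i' == i). Qed.

Lemma ind_inr j j' : ind (inr j) (inr j' : vert m n) = (j' == j)%:R.
Proof. by rewrite /ind -[inr j' == inr j]/(j' == j); case: (j' == j). Qed.

Lemma ind_inl_inr i j : ind (inl i) (inr j : vert m n) = 0.
Proof. by []. Qed.

Lemma ind_inr_inl i j : ind (inr j) (inl i : vert m n) = 0.
Proof. by []. Qed.

Lemma sum_ind c : \sum_x ind c x = 1.
Proof. by rewrite (bigD1 c) //= /ind eqxx big1 ?addr0 // => y /negbTE ->. Qed.

Lemma sum_ind_adj c x :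
  \sum_(c' : vert m n | adj c c') ind c' x = (adj c x)%:R.
Proof.
have [adj_cx|nadj_cx] := boolP (adj c x).
  rewrite (bigD1 x) //= big1 ?addr0; first by rewrite /ind eqxx.
  by move=> y /andP[_ /negbTE ne_yx]; rewrite /ind eq_sym ne_yx.
rewrite big1 // => y adj_cy; rewrite /ind; case: eqP => // eq_xy.
by rewrite eq_xy adj_cy in nadj_cx.
Qed.

Lemma sum_Delta k x : \sum_c k c * Delta c x = Lap k x.
Proof.
rewrite /Delta; under eq_bigr => c _ do rewrite sum_ind_adj mulrBr.
rewrite sumrB (bigD1 x) //= big1 ?addr0; last first.
  by move=> y /negbTE ne_yx; rewrite /ind eq_sym ne_yx !mulr0.
rewrite /ind eqxx mulr1 big_sumType /=.
case: x => [i|j] /=.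
  rewrite big1 ?add0r => [|y _]; last by rewrite mulr0.
  by rewrite mulrC; congr (_ - _); apply: eq_bigr => y _; rewrite mulr1.
rewrite [X in _ - (_ + X)]big1 ?addr0 => [|y _]; last by rewrite mulr0.
by rewrite mulrC; congr (_ - _); apply: eq_bigr => y _; rewrite mulr1.
Qed.

Lemma effectiveP D : effective D <-> exists k, forall x, Lap k x <= D x.
Proof.
split=> [[v [v_ge0 [k Dv]]]|[k Lap_le]].
  by exists k => x; rewrite -sum_Delta -Dv gerBl.
exists (fun x => D x - Lap k x); split=> [x|]; first by rewrite subr_ge0.
by exists k => x; rewrite sum_Delta opprB addrC subrK.
Qed.

Lemma effective_ext D D' : D =1 D' -> effective D -> effective D'.
Proof. by move=> eqD /effectiveP[k Lap_le]; apply/effectiveP; exists k => x; rewrite -eqD. Qed.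

Lemma sum_Lap k : \sum_x Lap k x = 0.
Proof.
rewrite big_sumType /= !sumrB -!mulr_sumr !sumr_const !card_ord.
by rewrite -[_ *+ m]mulr_natl -[_ *+ n]mulr_natl !natz; ring.
Qed.

Lemma effective_degree_ge0 D : effective D -> 0 <= degree D.
Proof.
case/effectiveP=> k Lap_le.
have : 0 <= \sum_x (D x - Lap k x) by apply: sumr_ge0 => x _; rewrite subr_ge0.
by rewrite sumrB sum_Lap subr0.
Qed.

Lemma Lap_shift k (a : int) x : Lap (fun c => k c - a) x = Lap k x.
Proof.
by case: x => [i|j] /=; rewrite sumrB sumr_const card_ord -mulr_natl natz; ring.
Qed.

Lemma Lap_mono {k k' x} : (forall c, k' c <= k c) -> k x = k' x -> Lap k x <= Lap k' x.
Proof. by move=> le_k'k; case: x => [i|j] /= ->; apply: lerB => //; apply: ler_sum. Qed.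

Lemma Lap_csub k k' x : Lap (csub k k') x = Lap k x - Lap k' x.
Proof. by case: x => [i|j] /=; rewrite /csub sumrB; ring. Qed.

Lemma Lap_ind_inl i x :
  Lap (ind (inl i)) x = if x is inl i' then n%:Z * (i' == i)%:R else -1.
Proof.
case: x => [i'|j] /=; first by rewrite big1 ?subr0 ?ind_inl.
rewrite (bigD1 i) //= ind_inl eqxx big1 => [|i' /negbTE ne_i'i]; last by rewrite ind_inl ne_i'i.
by rewrite mulr0 addr0 sub0r.
Qed.

Section PointwiseMax.
Context {D : config m n} {i : 'I_m} {k : 'I_n -> config m n} {F : config m n}.
Hypothesis Lap_k_le : forall j x, Lap (k j) x <= D x + ind (inl i) x - ind (inr j) x.
Hypothesis k_inl : forall j, k j (inl i) = 0.
Hypothesis F_ge : forall j c, k j c <= F c.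
Hypothesis F_attained : forall c, exists j, F c = k j c.

Lemma max_inl : F (inl i) = 0.
Proof. by have [j ->] := F_attained (inl i). Qed.

Lemma Lap_max_le x : Lap F x <= D x + ind (inl i) x.
Proof.
have [j Fx] := F_attained x.
have := Lap_k_le j x; have := Lap_mono (F_ge j) Fx; have := ind_ge0 (inr j) x.
lia.
Qed.

Lemma effective_of_strict_max :
  (exists j, k j (inr j) < F (inr j)) -> effective D.
Proof.
move=> [j lt_kF]; apply/effectiveP; exists F => x.
have [->|ne_x] := eqVneq x (inl i); last first.
  by have := Lap_max_le x; rewrite /ind (negbTE ne_x) addr0.
have : \sum_(j' < n) k j (inr j') < \sum_(j' < n) F (inr j').
  rewrite [X in _ < X](bigD1 j) //= [X in X < _](bigD1 j) //=.
  by apply: ltr_leD => //; apply: ler_sum.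
have := Lap_k_le j (inl i).
rewrite /= max_inl k_inl ind_inl eqxx ind_inr_inl /=; lia.
Qed.

Lemma effective_of_tight_max :
  (0 < n)%N -> (forall j, F (inr j) = k j (inr j)) -> effective D.
Proof.
move=> n_gt0 F_tight; apply/effectiveP; exists (csub F (ind (inl i))) => x.
rewrite Lap_csub Lap_ind_inl; case: x => [i'|j].
  have := Lap_max_le (inl i'); rewrite ind_inl.
  by case: (i' == i) => /=; lia.
have := Lap_k_le j (inr j); have := Lap_mono (F_ge j) (F_tight j).
rewrite ind_inr eqxx ind_inl_inr /=; lia.
Qed.

End PointwiseMax.

Lemma effective_of_chip_moves D i : (0 < n)%N ->
  (forall j, effective (fun x => D x + ind (inl i) x - ind (inr j) x)) ->
  effective D.
Proof.
move=> n_gt0 eff_moves.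
have /fin_all_exists[k0 Lap_k0_le] : forall j, exists k,
    forall x, Lap k x <= D x + ind (inl i) x - ind (inr j) x.
  by move=> j; apply/effectiveP.
pose k j c := k0 j c - k0 j (inl i).
have Lap_k_le j x : Lap (k j) x <= D x + ind (inl i) x - ind (inr j) x.
  by rewrite Lap_shift.
have k_inl j : k j (inl i) = 0 by rewrite /k subrr.
pose F c := k [arg max_(j > Ordinal n_gt0) k j c]%O c.
have F_ge j c : k j c <= F c by rewrite /F; case: arg_maxP => // j' _; apply.
have F_attained c : exists j, F c = k j c by exists [arg max_(j > Ordinal n_gt0) k j c]%O.
have [/existsP strict|/existsPn tight] := boolP [exists j, k j (inr j) < F (inr j)].
  exact: (effective_of_strict_max Lap_k_le k_inl F_ge F_attained strict).
apply: (effective_of_tight_max Lap_k_le F_ge F_attained n_gt0) => j.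
by apply/eqP; rewrite eq_le F_ge leNgt tight.
Qed.

Definition obstruction u f := nonneg f /\ ~ effective (csub u f).

Definition min_obstruction u f :=
  obstruction u f /\ forall g, obstruction u g -> degree f <= degree g.

Lemma min_obstruction_rank_proof u f : min_obstruction u f -> is_rank_proof u f.
Proof.
case=> -[f_ge0 f_not_eff] f_min; exists (degree f - 1); rewrite /rank_is subrK.
by split=> //; split=> [|g g_ge0 g_not_eff]; [exists f | apply: f_min].
Qed.

Lemma exists_obstruction u : (0 < m)%N -> exists f, obstruction u f.
Proof.
move=> m_gt0; pose f x := (`|degree u| + 1) * ind (inl (Ordinal m_gt0)) x.
have deg_f : degree f = `|degree u| + 1 by rewrite /degree -mulr_sumr sum_ind mulr1.
exists f; split=> [x|/effective_degree_ge0].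
  by rewrite mulr_ge0 ?ind_ge0 // addr_ge0.
by rewrite /degree /csub sumrB -/(degree u) -/(degree f) deg_f; have := ler_norm (degree u); lia.
Qed.

Lemma exists_min_obstruction u : (0 < m)%N -> exists f, min_obstruction u f.
Proof.
move=> m_gt0; pose P d := exists2 f, obstruction u f & degree f = d%:Z.
have degree_ge0 f : obstruction u f -> 0 <= degree f.
  by case=> f_ge0 _; apply: sumr_ge0 => x _.
have P_degree f : obstruction u f -> P `|degree f|%N.
  by move=> obs_f; exists f; rewrite ?gez0_abs ?degree_ge0.
have [f obs_f] := exists_obstruction u m_gt0.
have [d [f' obs_f' deg_f'] d_min] := classical_ex_minn (ex_intro _ _ (P_degree f obs_f)).
exists f'; split=> // g obs_g.
rewrite deg_f' -(gez0_abs (degree_ge0 g obs_g)) lez_nat.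
exact/d_min/P_degree.
Qed.

Definition massA f := \sum_(i < m) f (inl i).

Lemma massA_gt0 f : 0 < massA f -> exists i, 0 < f (inl i).
Proof.
move=> mass_gt0; apply/existsP; apply: contraTT mass_gt0 => /existsPn f_le0.
by rewrite -leNgt; apply: sumr_le0 => i _; rewrite leNgt f_le0.
Qed.

Definition move_chip f i j : config m n :=
  fun x => f x - ind (inl i) x + ind (inr j) x.

Lemma degree_move_chip f i j : degree (move_chip f i j) = degree f.
Proof. by rewrite /degree big_split sumrB /= !sum_ind subrK. Qed.

Lemma massA_move_chip f i j : massA (move_chip f i j) = massA f - 1.
Proof.
rewrite /massA /move_chip; under eq_bigr => i' _ do rewrite ind_inr_inl addr0.
rewrite sumrB; congr (_ - _).
rewrite (bigD1 i) //= ind_inl eqxx big1 ?addr0 // => i' /negbTE ne_i'i.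
by rewrite ind_inl ne_i'i.
Qed.

Lemma move_chip_ge0 f i j : nonneg f -> 0 < f (inl i) -> nonneg (move_chip f i j).
Proof.
move=> f_ge0 f_i_gt0 [i'|j'] /=; rewrite /move_chip ?ind_inl ?ind_inr_inl.
  by case: eqP => [->|_]; rewrite addr0 ?subr_ge0 ?subr0 ?f_ge0.
by rewrite ind_inl_inr subr0 addr_ge0 ?ind_ge0.
Qed.

Lemma min_obstruction_move_chip u f i : (0 < n)%N ->
  min_obstruction u f -> 0 < f (inl i) ->
  exists j, min_obstruction u (move_chip f i j).
Proof.
move=> n_gt0 [[f_ge0 f_not_eff] f_min] f_i_gt0.
have /not_all_ex_not[j not_eff] :
    ~ forall j, effective (fun x => csub u f x + ind (inl i) x - ind (inr j) x).
  by move=> eff_moves; apply: f_not_eff; apply: effective_of_chip_moves eff_moves.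
exists j; split; last by move=> g; rewrite degree_move_chip; apply: f_min.
split; first exact: move_chip_ge0.
by move=> eff; apply: not_eff; apply: effective_ext eff => x; rewrite /csub /move_chip; ring.
Qed.

Lemma min_obstruction_on_B u f : (0 < n)%N -> min_obstruction u f ->
  exists f', min_obstruction u f' /\ forall i, f' (inl i) = 0.
Proof.
move=> n_gt0 f_min.
have [a mass_f] : exists a : nat, massA f = a%:Z.
  by exists `|massA f|%N; rewrite gez0_abs // sumr_ge0 // => i _; apply: f_min.1.1.
elim: a f mass_f f_min => [|a IH] f mass_f f_min.
  exists f; split=> // i; apply: (psumr_eq0P _ mass_f) => // i' _.
  exact: f_min.1.1.
have [i f_i_gt0] : exists i, 0 < f (inl i) by apply: massA_gt0; rewrite mass_f.
have [j mf_min] : exists j, min_obstruction u (move_chip f i j).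
  exact: min_obstruction_move_chip.
apply: IH mf_min; rewrite massA_move_chip mass_f; lia.
Qed.

End CompleteBipartite.

Theorem lemma8p2 (m n : nat) (hm : (1 <= m)%N) (hn : (1 <= n)%N)
  (u : config m n) :
  exists f : config m n, is_rank_proof u f /\ (forall i : 'I_m, f (inl i) = 0).
Proof.
have [f f_min] := exists_min_obstruction u hm.
have [f' [f'_min f'_B]] := min_obstruction_on_B u f hn f_min.
by exists f'; split; first exact: min_obstruction_rank_proof.
Qed.
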